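(* Let $n\ge3$ and let $X_n$ be a connected Coxeter graph with $n$ vertices of one of the types $A_n$, $B_n$, $D_n$, $F_4$, $H_3$, $H_4$. Then the maps $y_i\mapsto x_i$ and $x_i\mapsto x_i$ define surjective length-preserving monoid homomorphisms $$K^{\infty}_n \xrightarrow{\ \phi\ } \mathcal{X}^{\infty}_n \xrightarrow{\ \psi\ } \mathcal{X}^{+}_n .$$
   Context: Coxeter graphs and the types: $A_n$ is the path $x_1-\cdots-x_n$ with all labels $3$; $B_n$ the same path with edge $x_{n-1}x_n$ labeled $4$; $D_n$ ($n\ge4$) is the path $x_1-\cdots-x_{n-2}$ with $x_{n-1}$ and $x_n$ both joined to $x_{n-2}$ (labels $3$); $F_4$ is the path $x_1-x_2-x_3-x_4$ with $x_2x_3$ labeled $4$; $H_3,H_4$ are paths on $3$, resp. $4$ vertices with $x_1x_2$ labeled $5$. For a graph with labels $r_{ij}$ ($r_{ij}=2$ if no edge), $\mathcal{X}^{+}_n=\langle x_1,\dots,x_n\mid x_ix_jx_i\cdots=x_jx_ix_j\cdots$ (both sides of length $r_{ij}$)$\rangle$ is the Artin monoid, and $\mathcal{X}^{\infty}_n$ is the associated right-angled monoid obtained by replacing every label $\ge3$ by $\infty$, i.e. $\mathcal{X}^{\infty}_n=\langle x_1,\dots,x_n\mid x_ix_j=x_jx_i \text{ whenever } x_i,x_j \text{ are not joined by an edge}\rangle$. For $n\ge3$, $K^{\infty}_n=\langle y_1,\dots,y_n\mid y_iy_j=y_jy_i\ (j+2\le i\le n-1),\ y_ny_k=y_ky_n\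 (1\le k\le n-3)\rangle$. *)

From mathcomp Require Import all_boot.
Set Implicit Arguments. Unset Strict Implicit. Unset Printing Implicit Defensive.

(* Monoids given by presentations <S | R>, represented on words (seq S).
   Elements of the presented monoid are congruence classes of words. *)

Inductive cong (S : Type) (R : seq S -> seq S -> Prop) : seq S -> seq S -> Prop :=
| cong_rel u l r v : R l r -> cong R (u ++ l ++ v) (u ++ r ++ v)
| cong_refl w : cong R w w
| cong_sym u v : cong R u v -> cong R v u
| cong_trans u v w : cong R u v -> cong R v w -> cong R u w.

(* The generator map g : S -> T induces a (well-defined) monoid homomorphism
   <S | R> -> <T | Q>, i.e. w |-> map g w respects the congruences. *)
Definition induces_hom (S T : Type) (R : seq S -> seq S -> Prop)
  (Q : seq T -> seq T -> Prop) (g : S -> T) : Prop :=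
  forall u v, cong R u v -> cong Q (map g u) (map g v).

Definition hom_surjective (S T : Type) (Q : seq T -> seq T -> Prop)
  (g : S -> T) : Prop :=
  forall w : seq T, exists u : seq S, cong Q (map g u) w.

(* The length of an element of a presented monoid is well defined. *)
Definition homogeneous (S : Type) (R : seq S -> seq S -> Prop) : Prop :=
  forall u v, cong R u v -> size u = size v.

(* The induced homomorphism preserves length (lengths being well defined). *)
Definition length_preserving (S T : Type) (R : seq S -> seq S -> Prop)
  (Q : seq T -> seq T -> Prop) (g : S -> T) : Prop :=
  homogeneous R /\ homogeneous Q /\ forall u : seq S, size (map g u) = size u.

(* Coxeter graph types. Vertices x_1..x_n are encoded as 0..n-1 : 'I_n. *)
Inductive cox_type := TA | TB | TD | TF4 | TH3 | TH4.

Definition type_ok (t : cox_type) (n : nat) : bool :=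
  match t with
  | TA => true | TB => true | TD => 4 <= n
  | TF4 => n == 4 | TH3 => n == 3 | TH4 => n == 4
  end.

(* label of the (0-based) pair a < b; 2 means "no edge" *)
Definition label0 (t : cox_type) (n a b : nat) : nat :=
  match t with
  | TA => if b == a.+1 then 3 else 2
  | TB => if b == a.+1 then (if b == n.-1 then 4 else 3) else 2
  | TD => if ((b == a.+1) && (b <= n - 2)) || ((a == n - 3) && (b == n - 1))
          then 3 else 2
  | TF4 => if b == a.+1 then (if a == 1 then 4 else 3) else 2
  | TH3 | TH4 => if b == a.+1 then (if a == 0 then 5 else 3) else 2
  end.

Definition cox_label (t : cox_type) {n : nat} (i j : 'I_n) : nat :=
  label0 t n (minn i j) (maxn i j).

Definition alt (n : nat) (i j : 'I_n) (m : nat) : seq 'I_n :=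
  mkseq (fun k => if odd k then j else i) m.

Definition artin_rel (t : cox_type) (n : nat) (l r : seq 'I_n) : Prop :=
  exists i j : 'I_n, i != j /\ l = alt i j (cox_label t i j)
                            /\ r = alt j i (cox_label t i j).

Definition ra_rel (t : cox_type) (n : nat) (l r : seq 'I_n) : Prop :=
  exists i j : 'I_n, i != j /\ cox_label t i j = 2
                    /\ l = [:: i; j] /\ r = [:: j; i].

(* K^infty_n relations (0-based): y_i y_j = y_j y_i for j+2 <= i <= n-1,
   y_n y_k = y_k y_n for 1 <= k <= n-3 (1-based). *)
Definition K_rel (n : nat) (l r : seq 'I_n) : Prop :=
  exists i j : 'I_n,
    ((j + 2 <= i <= n - 2) || ((nat_of_ord i == n - 1) && (j + 4 <= n)))
    /\ l = [:: i; j] /\ r = [:: j; i].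

Arguments K_rel n l r : clear implicits.
Arguments ra_rel t n l r : clear implicits.
Arguments artin_rel t n l r : clear implicits.

(* Every defining relation of K^oo_n is a commutation y_i y_j = y_j y_i of two
   generators that are not joined in X_n, hence a defining relation of X^oo_n;
   every such commutation is the length-2 braid relation of X^+_n.  So the
   identity on generators respects the congruences, and it is onto and
   length-preserving because all three presentations are homogeneous. *)
From mathcomp Require Import all_boot.
From mathcomp Require Import zify.

Section Congruence.

Variable S : Type.
Implicit Types (R Q : seq S -> seq S -> Prop) (u v w : seq S).

Lemma cong_cat R u v w1 w2 :
  cong R w1 w2 -> cong R (u ++ w1 ++ v) (u ++ w2 ++ v).
Proof.
elim=> {w1 w2} [x l r y Hlr | w | w1 w2 _ IH | w1 w2 w3 _ IH12 _ IH23].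
- have := @cong_rel _ R (u ++ x) l r (y ++ v) Hlr.
  by rewrite -!catA.
- exact: cong_refl.
- exact: cong_sym.
- exact: cong_trans IH12 IH23.
Qed.

Lemma cong_of_rel R l r : R l r -> cong R l r.
Proof. by move=> Hlr; have := @cong_rel _ R [::] l r [::] Hlr; rewrite /= !cats0. Qed.

Lemma cong_sub R Q :
  (forall l r, R l r -> cong Q l r) -> forall u v, cong R u v -> cong Q u v.
Proof.
move=> RQ u v; elim=> {u v} [u l r v Hlr | w | u v _ IH | u v w _ IHuv _ IHvw].
- exact: cong_cat (RQ _ _ Hlr).
- exact: cong_refl.
- exact: cong_sym.
- exact: cong_trans IHuv IHvw.
Qed.

Lemma homogeneous_rel R :
  (forall l r, R l r -> size l = size r) -> homogeneous R.
Proof.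
move=> Rsize u v; elim=> {u v} [u l r v Hlr | // | u v _ -> // | u v w _ -> _ -> //].
by rewrite !size_cat (Rsize _ _ Hlr).
Qed.

Lemma induces_hom_id R Q :
  (forall l r, R l r -> cong Q l r) -> induces_hom R Q (fun s : S => s).
Proof. by move=> RQ u v; rewrite !map_id; apply: cong_sub. Qed.

Lemma hom_surjective_id Q : hom_surjective Q (fun s : S => s).
Proof. by move=> w; exists w; rewrite map_id; apply: cong_refl. Qed.

Lemma length_preserving_id R Q :
  homogeneous R -> homogeneous Q -> length_preserving R Q (fun s : S => s).
Proof. by move=> hR hQ; do 2!split=> //; move=> u; rewrite map_id. Qed.

End Congruence.

Lemma homogeneous_K_rel n : homogeneous (K_rel n).
Proof. by apply: homogeneous_rel => l r [i [j [_ [-> ->]]]]. Qed.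

Lemma homogeneous_ra_rel t n : homogeneous (ra_rel t n).
Proof. by apply: homogeneous_rel => l r [i [j [_ [_ [-> ->]]]]]. Qed.

Lemma homogeneous_artin_rel t n : homogeneous (artin_rel t n).
Proof. by apply: homogeneous_rel => l r [i [j [_ [-> ->]]]]; rewrite !size_mkseq. Qed.

Lemma cox_labelE t n (i j : 'I_n) : j < i -> cox_label t i j = label0 t n j i.
Proof.
move=> lt_ji; rewrite /cox_label.
by rewrite (minn_idPr (ltnW lt_ji)) (maxn_idPl (ltnW lt_ji)).
Qed.

(* The only edge of a Coxeter graph of these types between non-consecutive
   vertices is the fork x_{n-2} - x_n of D_n. *)
Lemma label0_nonadjacent t n a b :
  a.+2 <= b -> ~~ ((a == n - 3) && (b == n - 1)) -> label0 t n a b = 2.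
Proof.
move=> le_ab not_fork.
have not_next : (b == a.+1) = false by apply/eqP; lia.
by case: t; rewrite /label0 not_next ?(negbTE not_fork).
Qed.

Lemma K_rel_ra_rel t n l r : K_rel n l r -> cong (ra_rel t n) l r.
Proof.
move=> [i [j [Hij [-> ->]]]]; apply: cong_of_rel; exists i, j.
have lt_i := ltn_ord i.
have le_ji : j.+2 <= i by case/orP: Hij => /andP [] /=; lia.
split; first by apply/eqP => eq_ij; move: le_ji; rewrite eq_ij; lia.
split=> //; rewrite cox_labelE; last by lia.
apply: label0_nonadjacent => //; apply/negP => /andP [/eqP ? /eqP ?].
by case/orP: Hij => /andP [] /=; lia.
Qed.

Lemma ra_rel_artin_rel t n l r : ra_rel t n l r -> cong (artin_rel t n) l r.
Proof.
move=> [i [j [neq_ij [lab2 [-> ->]]]]]; apply: cong_of_rel.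
by exists i, j; rewrite /alt lab2.
Qed.

Theorem proposition1 (n : nat) (t : cox_type) :
  3 <= n -> type_ok t n ->
  let phi := fun i : 'I_n => i in   (* y_i |-> x_i *)
  let psi := fun i : 'I_n => i in   (* x_i |-> x_i *)
  (induces_hom (K_rel n) (ra_rel t n) phi
   /\ hom_surjective (ra_rel t n) phi
   /\ length_preserving (K_rel n) (ra_rel t n) phi)
  /\
  (induces_hom (ra_rel t n) (artin_rel t n) psi
   /\ hom_surjective (artin_rel t n) psi
   /\ length_preserving (ra_rel t n) (artin_rel t n) psi).
Proof.
move=> _ _ phi psi; split; split; [| split | | split].
- by apply: induces_hom_id => l r; apply: K_rel_ra_rel.
- exact: hom_surjective_id.
- exact/length_preserving_id/homogeneous_ra_rel/homogeneous_K_rel.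
- by apply: induces_hom_id => l r; apply: ra_rel_artin_rel.
- exact: hom_surjective_id.
- exact/length_preserving_id/homogeneous_artin_rel/homogeneous_ra_rel.
Qed.
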